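(* Let $G(x)=\sum_{T\in\mathcal T} w(T)$ be the generating function of Smirnov trees, a formal power series in $x_1,x_2,\dots$ with coefficients in $\mathbb Z[\bar\rho,\rho,\bar\lambda,\lambda]$. Then $$G(x)=\sum_{n\ge1}\sum_{w\in\mathcal W_n} s^{\operatorname{asc} w}\,t^{\operatorname{des} w}\,x_w,$$ where $s=\bar\rho\,\bar\lambda\,G(x)+\bar\rho+\bar\lambda$ and $t=\rho\,\lambda\,G(x)+\rho+\lambda$.
   Context: A word $w=w_1\cdots w_n$ over $\mathbb N=\{1,2,\dots\}$ is a Smirnov word of length $n$ if $w_i\ne w_{i+1}$ for $i=1,\dots,n-1$; $\mathcal W_n$ is the set of Smirnov words of length $n$, $x_w=x_{w_1}\cdots x_{w_n}$, $\operatorname{asc} w=|\{i: w_i<w_{i+1}\}|$, $\operatorname{des} w=|\{i:w_i>w_{i+1}\}|$. Trees are labeled rooted binary trees (each child is a left or a right child, at most one of each) with labels in $\mathbb N$ and at least one node. A Smirnov tree is such a tree where: whenever a left child has the same label $i$ as its parent, the parent also has a right child with label $<i$; and whenever a right child has the same label $i$ as its parent, the parent also has a left child with label $>i$. $\mathcal T$ is the set of Smirnov trees. Weights: $\rho,\bar\rho,\lambda,\bar\lambda$ are commuting indeterminates. An edge from a parent with label $a$ to its right child with label $b$ has weight $\bar\rho$ if $a\le b$ and $\rho$ if $a>b$. An edge between a left child with label $a$ and its parent with label $b$ has weight $\bar\lambda$ if $a\le b$ and $\lambda$ if $a>b$. A node with label $a$ has weight $x_a$. The weight $w(T)$ is the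 product of the weights of all edges and nodes of $T$. *)

From HB Require Import structures.
From mathcomp Require Import all_boot all_order all_algebra.
From mathcomp Require Import mpoly.
Set Implicit Arguments. Unset Strict Implicit. Unset Printing Implicit Defensive.
Import Order.TTheory GRing.Theory.
Local Open Scope ring_scope.

Definition Coef := {mpoly int[4]}.
Definition rhob : Coef := 'X_(0 : 'I_4).
Definition rho  : Coef := 'X_(1 : 'I_4).
Definition lamb : Coef := 'X_(2 : 'I_4).
Definition lam  : Coef := 'X_(3 : 'I_4).

(* Polynomials in the variables x_1..x_N (variable i : 'I_N stands for x_(i+1)),
   with coefficients in Coef.  Labels in {1..N} are represented by 'I_N, with
   the order of N transported via val. *)
Definition Ser (N : nat) := {mpoly Coef[N]}.

(* Labeled binary trees, possibly empty (BLeaf = empty tree); a tree in the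
   paper's sense is a BNode. *)
Inductive btree (T : Type) :=
| BLeaf
| BNode of btree T & T & btree T.
Arguments BLeaf {T}.

Fixpoint bsize T (t : btree T) : nat :=
  match t with BLeaf => 0%N | BNode l _ r => (bsize l + bsize r).+1 end.

Definition broot T (t : btree T) : option T :=
  if t is BNode _ a _ then Some a else None.

Fixpoint smirnov_nodes N (t : btree 'I_N) : bool :=
  match t with
  | BLeaf => true
  | BNode l a r =>
      [&& (if broot l is Some b then
             (val b == val a) ==>
             (if broot r is Some c then (val c < val a)%N else false)
           else true),
          (if broot r is Some b then
             (val b == val a) ==>
             (if broot l is Some c then (val c > val a)%N else false)
           else true),
          smirnov_nodes l & smirnov_nodes r]
  end.

Definition smirnov_tree N (t : btree 'I_N) : bool :=
  (bsize t > 0)%N && smirnov_nodes t.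

Fixpoint tweight N (t : btree 'I_N) : Ser N :=
  match t with
  | BLeaf => 1
  | BNode l a r =>
      'X_a *
      (if l is BNode _ c _ then
         (if (val c <= val a)%N then lamb else lam)%:MP * tweight l else 1) *
      (if r is BNode _ c _ then
         (if (val a <= val c)%N then rhob else rho)%:MP * tweight r else 1)
  end.

(* all trees of height <= d with labels in 'I_N, each listed exactly once *)
Fixpoint trees_upto N (d : nat) : seq (btree 'I_N) :=
  match d with
  | 0 => [:: BLeaf]
  | d'.+1 => BLeaf :: flatten [seq flatten [seq [seq BNode l a r | r <- trees_upto N d']
                                           | a <- enum 'I_N]
                             | l <- trees_upto N d']
  end.

(* G restricted to labels in {1..N} and trees with at most D nodes *)
Definition Gtrunc N D : Ser N :=
  \sum_(t <- trees_upto N D | (bsize t <= D)%N && smirnov_tree t) tweight t.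

Definition trunc N D (p : Ser N) : Ser N :=
  \sum_(m <- msupp p | (mdeg m <= D)%N) p@_m *: 'X_[m].

Definition adjpairs T (w : seq T) := zip w (behead w).
Definition smirnov_word N (w : seq 'I_N) : bool :=
  all (fun p => val p.1 != val p.2) (adjpairs w).
Definition asc N (w : seq 'I_N) : nat :=
  count (fun p => (val p.1 < val p.2)%N) (adjpairs w).
Definition des N (w : seq 'I_N) : nat :=
  count (fun p => (val p.1 > val p.2)%N) (adjpairs w).
Definition xw N (w : seq 'I_N) : Ser N := \prod_(i <- w) 'X_i.

(* Sort Smirnov trees by the label a of their root: G = sum_a G_a, and put
   P_a = sum_(b < a) G_b and Q_a = sum_(b > a) G_b.  Splitting a tree at its
   root gives the recursion
     G_a = x_a ((1 + lamb P_a + lam Q_a) (1 + rho P_a + rhob Q_a)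
                + lamb rho G_a P_a + lam rhob Q_a G_a),
   where the last two terms account for a child labelled a itself.  The sums
   W_a of the weights of the Smirnov words starting with a are the unique
   solution of
     W_a = x_a (1 + s sum_(b > a) W_b + t sum_(b < a) W_b).
   The Moebius map phi(u) = (1 + lamb G) u / (1 + lam G + (lamb - lam) u)
   fixes 0 and G, and turns the tree recursion into the word recursion for the
   increments phi(P_a + G_a) - phi(P_a).  Hence these increments are the W_a,
   and their telescoping sum phi(G) = G is the sum of all word weights.
   Everything is computed modulo monomials of degree > D, where 1 + g with g of
   positive order is inverted by a truncated geometric series. *)

From HB Require Import structures.
From mathcomp Require Import all_boot all_order all_algebra.
From mathcomp Require Import mpoly ring zify.
Set Implicit Arguments. Unset Strict Implicit. Unset Printing Implicit Defensive.
Import GRing.Theory.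
Local Open Scope ring_scope.

Section MonomialOrder.
Variables (R : nzRingType) (n : nat).
Implicit Types (p q g h : {mpoly R[n]}) (j k : nat).

Definition morder_ge k p := all (fun m => k <= mdeg m)%N (msupp p).

Lemma morder_geP k p :
  reflect (forall m, (mdeg m < k)%N -> p@_m = 0) (morder_ge k p).
Proof.
apply: (iffP allP) => [hp m hm | hp m]; last first.
  by rewrite mcoeff_msupp leqNgt; apply: contra => /hp ->.
by apply/eqP; apply: contraTT hm; rewrite -mcoeff_msupp -leqNgt => /hp.
Qed.

Lemma morder_ge0 p : morder_ge 0 p.
Proof. exact/morder_geP. Qed.

Lemma morder_ge_poly0 k : morder_ge k 0.
Proof. by apply/morder_geP => m _; rewrite mcoeff0. Qed.

Lemma morder_ge_le j k p : (j <= k)%N -> morder_ge k p -> morder_ge j p.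
Proof.
by move=> jk /morder_geP hp; apply/morder_geP => m hm; apply/hp/(leq_trans hm).
Qed.

Lemma morder_geD k p q : morder_ge k p -> morder_ge k q -> morder_ge k (p + q).
Proof.
move=> /morder_geP hp /morder_geP hq; apply/morder_geP => m hm.
by rewrite mcoeffD hp ?hq ?addr0.
Qed.

Lemma morder_geN k p : morder_ge k p -> morder_ge k (- p).
Proof.
by move=> /morder_geP hp; apply/morder_geP => m hm; rewrite mcoeffN hp ?oppr0.
Qed.

Lemma morder_geB k p q : morder_ge k p -> morder_ge k q -> morder_ge k (p - q).
Proof. by move=> hp /morder_geN; apply: morder_geD. Qed.

Lemma morder_ge_sum k I (r : seq I) (P : pred I) (F : I -> {mpoly R[n]}) :
  (forall i, P i -> morder_ge k (F i)) -> morder_ge k (\sum_(i <- r | P i) F i).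
Proof.
move=> hF; elim/big_rec: _ => [|i q Pi hq]; first exact: morder_ge_poly0.
exact: morder_geD (hF i Pi) hq.
Qed.

Lemma morder_geM j k p q :
  morder_ge j p -> morder_ge k q -> morder_ge (j + k) (p * q).
Proof.
move=> /morder_geP hp /morder_geP hq; apply/morder_geP => m hm.
rewrite mcoeffM big1 // => -[m1 m2] /= /eqP def_m.
have : (mdeg m1 + mdeg m2 < j + k)%N by rewrite -mdegD -def_m.
case: (ltnP (mdeg m1) j) => [h1 _ | h1 h12]; first by rewrite hp ?mul0r.
by rewrite hq ?mulr0 //; lia.
Qed.

Lemma morder_geMl k g p : morder_ge k p -> morder_ge k (g * p).
Proof. exact: morder_geM (morder_ge0 g). Qed.

Lemma morder_geMr k g p : morder_ge k p -> morder_ge k (p * g).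
Proof. by move=> /morder_geM /(_ (morder_ge0 g)); rewrite addn0. Qed.

Lemma morder_geX (i : 'I_n) : morder_ge 1 'X_i.
Proof.
apply/morder_geP => m; rewrite ltnS leqn0 mdeg_eq0 => /eqP->.
by rewrite mcoeffX mnm1_eq0.
Qed.

Lemma morder_ge_exp k p e : morder_ge k p -> morder_ge (k * e) (p ^+ e).
Proof.
move=> hp; elim: e => [|e IHe]; first by rewrite muln0; apply: morder_ge0.
by rewrite exprS mulnS; apply: morder_geM.
Qed.

Lemma morder_ge_prodX (w : seq 'I_n) : morder_ge (size w) (\prod_(i <- w) 'X_i).
Proof.
elim: w => [|i w IHw]; first exact: morder_ge0.
by rewrite big_cons; apply: morder_geM (morder_geX i) IHw.
Qed.

Lemma morder_ge_cancel k g h :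
  morder_ge 1 g -> morder_ge k ((1 + g) * h) -> morder_ge k h.
Proof.
move=> hg hgh; elim: k => [|k IHk] in hgh *; first exact: morder_ge0.
have hk : morder_ge k h by apply/IHk/(morder_ge_le _ hgh).
have -> : h = (1 + g) * h - g * h by rewrite mulrDl mul1r addrK.
exact: morder_geB hgh (morder_geM hg hk).
Qed.

Definition geom_inv k g := \sum_(i < k.+1) (- g) ^+ i.

Lemma geom_invP k g : morder_ge 1 g -> morder_ge k.+1 ((1 + g) * geom_inv k g - 1).
Proof.
move=> hg; have -> : (1 + g) * geom_inv k g - 1 = - (- g) ^+ k.+1.
  rewrite /geom_inv -[(1 + g) * _]opprK -mulNr opprD [-1 - g]addrC -subrX1.
  by rewrite opprB addrAC subrr add0r.
by apply: morder_geN; have := morder_ge_exp k.+1 (morder_geN hg); rewrite mul1n.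
Qed.

End MonomialOrder.

Arguments morder_ge_poly0 {R n} k.
Arguments morder_geX {R n} i.
Arguments morder_ge_prodX {R n} w.

Lemma mcoeff_trunc N D (p : Ser N) m :
  (trunc D p)@_m = if (mdeg m <= D)%N then p@_m else 0.
Proof.
rewrite /trunc raddf_sum /=.
under eq_bigr => m' _ do rewrite mcoeffZ mcoeffX.
rewrite big_mkcond /=; have [pm | pm0] := boolP (m \in msupp p).
  rewrite (bigD1_seq m) ?msupp_uniq //= eqxx mulr1 big1 ?addr0; first by case: ifP.
  by move=> m' /negbTE m'm; case: ifP => // _; rewrite m'm mulr0.
rewrite (memN_msupp_eq0 pm0) if_same big1_seq // => m' /andP [_ pm'].
case: ifP => // _; case: eqP => [def_m | _]; last by rewrite mulr0.
by rewrite -def_m pm' in pm0.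
Qed.

Lemma trunc_eq N D (p q : Ser N) : morder_ge D.+1 (p - q) -> trunc D p = trunc D q.
Proof.
move=> hpq; apply/mpolyP => m; rewrite !mcoeff_trunc; case: ifP => // hm.
by apply/eqP; rewrite -subr_eq0 -mcoeffB (morder_geP _ _ hpq).
Qed.

Section Moebius.
Variables (R : comNzRingType) (n D : nat) (rb rr lb ll G : {mpoly R[n]}).
Hypothesis G_order : morder_ge 1 G.

Local Notation s := (rb * lb * G + rb + lb).
Local Notation t := (rr * ll * G + rr + ll).

Definition moebius u := (1 + lb * G) * u * geom_inv D (ll * G + (lb - ll) * u).

Lemma moebius0 : moebius 0 = 0.
Proof. by rewrite /moebius mulr0 mul0r. Qed.

Lemma moebiusG : morder_ge D.+1 (moebius G - G).
Proof.
have -> : moebius G - G = G * ((1 + lb * G) * geom_inv D (lb * G) - 1).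
  by rewrite /moebius (_ : ll * G + (lb - ll) * G = lb * G); ring.
by apply/morder_geMl/geom_invP/morder_geMl.
Qed.

Lemma moebius_step x P Ga :
  morder_ge 1 x -> morder_ge 1 P -> morder_ge 1 Ga ->
  let Q := G - (P + Ga) in
  morder_ge D.+1 (Ga - x * ((1 + lb * P + ll * Q) * (1 + rr * P + rb * Q)
                            + lb * Ga * (rr * P) + ll * Q * (rb * Ga))) ->
  morder_ge D.+1 (moebius (P + Ga) - moebius P
                  - x * (1 + s * (G - moebius (P + Ga)) + t * moebius P)).
Proof.
move=> hx hP hGa Q hH.
have g_order u : morder_ge 1 u -> morder_ge 1 (ll * G + (lb - ll) * u).
  by move=> hu; apply: morder_geD; apply: morder_geMl.
set H := (X in morder_ge _ X) in hH; set E := (X in morder_ge _ X).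
set P' := P + Ga.
set g := ll * G + (lb - ll) * P; set g' := ll * G + (lb - ll) * P'.
set I := geom_inv D g; set I' := geom_inv D g'.
set F := x * (ll + rb + ll * rb * G) + x * ((lb - ll) * (rb - rr)) * P.
have hF : morder_ge 1 F by apply: morder_geD; do !apply: morder_geMr.
set K := 1 + lb * G; set A := 1 + x * s; set B := - (1 + x * t).
set C := - (x * (1 + s * G)).
set c := (1 + g) * A * K + (lb - ll) * B * K * P + (lb - ll) * C * (1 + g).
(* Clearing the denominators [1 + g], [1 + g'] and the unit [1 + F] turns the
   claim into [c] times the tree recursion, up to the errors of the two
   truncated geometric series. *)
have key : (1 + F) * ((1 + g') * ((1 + g) * E)) =
    (1 + F) * ((1 + g) * A * K * P' * ((1 + g') * I' - 1)
               + (1 + g') * B * K * P * ((1 + g) * I - 1)) + c * H.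
  by rewrite /c /C /B /A /K /F /E /H /Q /moebius /I' /I /g' /g /P'; ring.
have hg := g_order P hP; have hg' := g_order P' (morder_geD hP hGa).
apply: (morder_ge_cancel hg); apply: (morder_ge_cancel hg').
apply: (morder_ge_cancel hF).
rewrite key; apply: morder_geD (morder_geMl _ hH); apply: morder_geMl.
by apply: morder_geD; apply: morder_geMl; apply: geom_invP.
Qed.

End Moebius.

Section Trees.
Variable N : nat.
Local Notation S := {mpoly Coef[N]}.
Local Notation tree := (btree 'I_N).
Local Notation T := (trees_upto N).
Local Notation lb := (lamb%:MP : S).
Local Notation ll := (lam%:MP : S).
Local Notation rb := (rhob%:MP : S).
Local Notation rr := (rho%:MP : S).
Implicit Types (a b c : 'I_N) (l r t : tree) (F : tree -> S).

(* Keeps the weights of concrete subtrees folded when [/=] exposes their roots. *)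
Local Arguments tweight : simpl never.

Lemma big_trees_uptoS d F :
  \sum_(t <- T d.+1) F t =
  F BLeaf + \sum_(l <- T d) \sum_(a < N) \sum_(r <- T d) F (BNode l a r).
Proof.
rewrite /= big_cons big_flatten /= big_map; congr (_ + _).
apply: eq_bigr => l _; rewrite big_flatten /= big_map big_enum /=.
by apply: eq_bigr => a _; rewrite big_map.
Qed.

Lemma big_pair_bsize (s : seq tree) k (W : tree -> tree -> S) :
  \sum_(l <- s) \sum_(r <- s) (if (bsize l + bsize r < k.+1)%N then W l r else 0) =
  \sum_(l <- s | (bsize l <= k)%N) \sum_(r <- s | (bsize r <= k)%N)
     (if (bsize l + bsize r < k.+1)%N then W l r else 0).
Proof.
rewrite [RHS]big_mkcond; apply: eq_bigr => l _.
case: (leqP (bsize l) k) => [lk | kl]; last first.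
  by rewrite big1 // => r _; rewrite ifF //; lia.
rewrite [RHS]big_mkcond; apply: eq_bigr => r _.
by case: (leqP (bsize r) k) => // kr; rewrite ifF //; lia.
Qed.

(* A tree of depth more than [k] has more than [k] nodes. *)
Lemma big_trees_upto_size d k F : (k <= d)%N ->
  \sum_(t <- T d.+1 | (bsize t <= k)%N) F t = \sum_(t <- T d | (bsize t <= k)%N) F t.
Proof.
elim: d => [|d IHd] in k F *.
  rewrite leqn0 => /eqP ->; rewrite big_mkcond big_trees_uptoS /= !big_seq1 /=.
  by rewrite big1 // addr0 big_mkcond big_seq1.
case: k => [_ | k kd].
  rewrite big_mkcond [RHS]big_mkcond [LHS]big_trees_uptoS [RHS]big_trees_uptoS.
  by congr (_ + _); rewrite !big1 // => l _; apply: big1 => a _; apply: big1.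
rewrite big_mkcond [RHS]big_mkcond [LHS]big_trees_uptoS [RHS]big_trees_uptoS.
congr (_ + _); rewrite [LHS]exchange_big [RHS]exchange_big; apply: eq_bigr => a _ /=.
rewrite !(big_pair_bsize _ _ (fun l r => F (BNode l a r))) IHd; last by lia.
by apply: eq_bigr => l _; rewrite IHd //; lia.
Qed.

Definition left_weight a l : S :=
  if l is BNode _ c _ then (if (val c <= val a)%N then lamb else lam)%:MP * tweight l
  else 1.
Definition right_weight a r : S :=
  if r is BNode _ c _ then (if (val a <= val c)%N then rhob else rho)%:MP * tweight r
  else 1.

Lemma tweight_node l a r :
  tweight (BNode l a r) = 'X_a * left_weight a l * right_weight a r.
Proof. by []. Qed.

Lemma morder_ge_tweight t : morder_ge (bsize t) (tweight t).
Proof.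
elim: t => [|l IHl a r IHr]; first exact: morder_ge0.
have hl : morder_ge (bsize l) (left_weight a l).
  by case: l IHl => //= *; apply: morder_geMl.
have hr : morder_ge (bsize r) (right_weight a r).
  by case: r IHr => //= *; apply: morder_geMl.
rewrite tweight_node (_ : bsize _ = 1 + bsize l + bsize r)%N; last by rewrite /=; lia.
exact: morder_geM (morder_geM (morder_geX a) hl) hr.
Qed.

Definition smirnov_at a l r :=
  (if broot l is Some b then
     (val b == val a) ==> (if broot r is Some c then (val c < val a)%N else false)
   else true) &&
  (if broot r is Some b then
     (val b == val a) ==> (if broot l is Some c then (val c > val a)%N else false)
   else true).

Lemma smirnov_nodes_node l a r : smirnov_nodes (BNode l a r) =
  [&& smirnov_at a l r, smirnov_nodes l & smirnov_nodes r].
Proof. by rewrite [LHS]/= /smirnov_at -andbA. Qed.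

Definition node_weight a l r : S :=
  if smirnov_nodes (BNode l a r) then tweight (BNode l a r) else 0.

Lemma morder_ge_node_weight a l r :
  morder_ge (bsize l + bsize r).+1 (node_weight a l r).
Proof.
rewrite /node_weight; case: ifP => _; last exact: morder_ge_poly0.
exact: (morder_ge_tweight (BNode l a r)).
Qed.

Definition smirnov_upto D t := (bsize t <= D)%N && smirnov_nodes t.

Lemma morder_ge_node_weight_trunc D a l r :
  morder_ge D.+1
    ((if (bsize l + bsize r < D)%N then node_weight a l r else 0)
     - (if smirnov_upto D l && smirnov_upto D r then node_weight a l r else 0)).
Proof.
rewrite /smirnov_upto; case: ifP => small; case: ifP => sub_ok;
  rewrite ?subrr ?subr0 ?sub0r; try exact: morder_ge_poly0.
  rewrite /node_weight smirnov_nodes_node; case: ifP => [/and3P [_ sl sr] | _].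
    by move: sub_ok; rewrite sl sr !andbT; lia.
  exact: morder_ge_poly0.
apply/morder_geN/(morder_ge_le _ (morder_ge_node_weight a l r)).
by move: sub_ok small; lia.
Qed.

Definition Groot D a : S :=
  \sum_(t <- T D | (bsize t <= D)%N && smirnov_tree t && (broot t == Some a)) tweight t.

Lemma Gtrunc_Groot D : Gtrunc N D = \sum_a Groot D a.
Proof.
rewrite /Groot; under eq_bigr do rewrite big_mkcond.
rewrite exchange_big /= /Gtrunc [LHS]big_mkcond; apply: eq_bigr => -[|l c r] _.
  by rewrite big1 // => a _; rewrite /smirnov_tree andbF.
rewrite (bigD1 c) //= eqxx andbT big1 ?addr0 // => b /negbTE bc.
by rewrite -[Some c == Some b]/(c == b) eq_sym bc andbF.
Qed.

Definition rooted_weight D (Pr : pred 'I_N) t : S :=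
  if t is BNode _ c _ then (if smirnov_upto D t && Pr c then tweight t else 0) else 0.

Definition leaf_weight t : S := if t is BLeaf then 1 else 0.

Lemma big_rooted_weight D (Pr : pred 'I_N) :
  \sum_(t <- T D) rooted_weight D Pr t = \sum_(b | Pr b) Groot D b.
Proof.
rewrite /Groot; under [RHS]eq_bigr do rewrite big_mkcond.
rewrite [RHS]exchange_big /=; apply: eq_bigr => -[|l c r] _.
  by rewrite big1 // => b _; rewrite /smirnov_tree andbF.
rewrite big_mkcond (bigD1 c) //= eqxx andbT big1 ?addr0.
  by rewrite /smirnov_upto /smirnov_tree; case: (Pr c); rewrite ?andbT ?andbF.
move=> b /negbTE bc; case: (Pr b) => //.
by rewrite -[Some c == _]/(c == b) eq_sym bc andbF.
Qed.

Lemma big_leaf_weight D : \sum_(t <- T D) leaf_weight t = 1.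
Proof.
case: D => [|d]; first by rewrite /= big_seq1.
rewrite big_trees_uptoS big1 ?addr0 // => l _.
by rewrite big1 // => a _; rewrite big1.
Qed.

Local Notation below a := (fun b : 'I_N => (val b < val a)%N).
Local Notation above a := (fun b : 'I_N => (val a < val b)%N).
Local Notation equal a := (fun b : 'I_N => val b == val a).

Lemma node_weight_factor D a l r :
  (if smirnov_upto D l && smirnov_upto D r then node_weight a l r else 0) =
  'X_a * ((leaf_weight l + lb * rooted_weight D (below a) l
                         + ll * rooted_weight D (above a) l)
          * (leaf_weight r + rr * rooted_weight D (below a) r
                           + rb * rooted_weight D (above a) r)
          + lb * rooted_weight D (equal a) l * (rr * rooted_weight D (below a) r)
          + ll * rooted_weight D (above a) l * (rb * rooted_weight D (equal a) r)).
Proof.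
have vanish t : ~~ smirnov_upto D t ->
    leaf_weight t = 0 /\ forall Pr, rooted_weight D Pr t = 0.
  by case: t => //= ? c ? /negbTE ->.
have [ol | /vanish [-> hPr]] := boolP (smirnov_upto D l); last first.
  by rewrite !hPr /=; ring.
have [or | /vanish [-> hPr]] := boolP (smirnov_upto D r); last first.
  by rewrite !hPr andbF; ring.
rewrite /node_weight smirnov_nodes_node /rooted_weight ol or.
move: ol or => /andP [_ ->] /andP [_ ->]; rewrite !andbT tweight_node.
rewrite /smirnov_at /left_weight /right_weight /leaf_weight.
case: l => [|l1 c l2]; case: r => [|r1 e r2] /=.
- ring.
- by case: (ltngtP (val e) (val a)) => _ /=; ring.
- by case: (ltngtP (val c) (val a)) => _ /=; ring.
by case: (ltngtP (val c) (val a)) => _; case: (ltngtP (val e) (val a)) => _ /=;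
  ring.
Qed.

Definition Groot_lt D k : S := \sum_(b : 'I_N | (val b < k)%N) Groot D b.
Definition Groot_gt D k : S := \sum_(b : 'I_N | (k < val b)%N) Groot D b.

Lemma Groot_rec d a :
  morder_ge d.+2 (Groot d.+1 a
    - 'X_a * ((1 + lb * Groot_lt d.+1 a + ll * Groot_gt d.+1 a)
                * (1 + rr * Groot_lt d.+1 a + rb * Groot_gt d.+1 a)
              + lb * Groot d.+1 a * (rr * Groot_lt d.+1 a)
              + ll * Groot_gt d.+1 a * (rb * Groot d.+1 a))).
Proof.
have Ga_subtrees : Groot d.+1 a = \sum_(l <- T d) \sum_(r <- T d)
    (if (bsize l + bsize r < d.+1)%N then node_weight a l r else 0).
  rewrite /Groot big_mkcond big_trees_uptoS /= add0r; apply: eq_bigr => l _.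
  rewrite (bigD1 a) //= [X in _ + X]big1 ?addr0; last first.
    move=> b /negbTE ba; apply: big1 => r _.
    by rewrite -[Some b == _]/(b == a) ba andbF.
  apply: eq_bigr => r _; rewrite eqxx andbT /node_weight /smirnov_tree ltn0Sn andTb.
  by case: (_ < _)%N.
have Ga_depth : Groot d.+1 a = \sum_(l <- T d.+1) \sum_(r <- T d.+1)
    (if (bsize l + bsize r < d.+1)%N then node_weight a l r else 0).
  rewrite Ga_subtrees !big_pair_bsize big_trees_upto_size //.
  by apply: eq_bigr => l _; rewrite big_trees_upto_size.
have Ga_factor :
    'X_a * ((1 + lb * Groot_lt d.+1 a + ll * Groot_gt d.+1 a)
              * (1 + rr * Groot_lt d.+1 a + rb * Groot_gt d.+1 a)
            + lb * Groot d.+1 a * (rr * Groot_lt d.+1 a)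
            + ll * Groot_gt d.+1 a * (rb * Groot d.+1 a)) =
    \sum_(l <- T d.+1) \sum_(r <- T d.+1)
      (if smirnov_upto d.+1 l && smirnov_upto d.+1 r then node_weight a l r else 0).
  under eq_bigr do under eq_bigr do rewrite node_weight_factor.
  have sum_bilinear (f1 g1 f2 g2 f3 g3 : tree -> S) :
      \sum_(l <- T d.+1) \sum_(r <- T d.+1)
        'X_a * (f1 l * g1 r + f2 l * g2 r + f3 l * g3 r)
      = 'X_a * ((\sum_(l <- T d.+1) f1 l) * (\sum_(r <- T d.+1) g1 r)
                + (\sum_(l <- T d.+1) f2 l) * (\sum_(r <- T d.+1) g2 r)
                + (\sum_(l <- T d.+1) f3 l) * (\sum_(r <- T d.+1) g3 r)).
    rewrite !big_distrlr -!big_split mulr_sumr; apply: eq_bigr => l _.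
    by rewrite -!big_split mulr_sumr.
  have Ga_eq : \sum_(b | val b == val a) Groot d.+1 b = Groot d.+1 a.
    by rewrite (big_pred1 a) // => b; apply: val_eqE.
  rewrite sum_bilinear !big_split -!mulr_sumr big_leaf_weight.
  by rewrite !big_rooted_weight Ga_eq.
rewrite {1}Ga_depth Ga_factor -sumrB; apply: morder_ge_sum => l _.
by rewrite -sumrB; apply: morder_ge_sum => r _; apply: morder_ge_node_weight_trunc.
Qed.

End Trees.

Lemma telescope_ord (V : zmodType) n (f : nat -> V) :
  \sum_(i < n) (f i.+1 - f i) = f n - f 0%N.
Proof. by rewrite -(big_mkord xpredT (fun i => f i.+1 - f i)) telescope_sumr. Qed.

Lemma telescope_ord_lt (V : zmodType) n k (f : nat -> V) : (k <= n)%N ->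
  \sum_(i : 'I_n | (i < k)%N) (f i.+1 - f i) = f k - f 0%N.
Proof.
by move=> kn; rewrite -(big_ord_widen _ (fun i => f i.+1 - f i) kn) telescope_ord.
Qed.

Lemma telescope_ord_gt (V : zmodType) n (j : 'I_n) (f : nat -> V) :
  \sum_(i : 'I_n | (j < i)%N) (f i.+1 - f i) = f n - f j.+1.
Proof.
have total := telescope_ord n f.
rewrite (bigID (fun i : 'I_n => (i < j.+1)%N)) /= telescope_ord_lt // in total.
apply: (addrI (f j.+1 - f 0%N)); rewrite [RHS]addrC [RHS]addrA subrK -total.
by congr (_ + _); apply: eq_bigl => i; rewrite ltnNge.
Qed.

Section Words.
Variables (N : nat) (s t : {mpoly Coef[N]}).
Local Notation S := {mpoly Coef[N]}.
Implicit Types (a b : 'I_N) (w : seq 'I_N).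

Definition word_weight w : S := s ^+ asc w * t ^+ des w * xw w.

Definition step_weight a b : S := if (val a < val b)%N then s else t.

Definition words_from n a : S :=
  \sum_(w : n.-tuple 'I_N | smirnov_word w && (ohead w == Some a)) word_weight w.

Definition words_upto D a : S := \sum_(1 <= n < D.+1) words_from n a.

Lemma big_tuple0 (F : 0.-tuple 'I_N -> S) :
  \sum_(w : 0.-tuple 'I_N) F w = F [tuple].
Proof. by rewrite (big_pred1 [tuple]) // => w; apply/esym/eqP/tuple0. Qed.

Lemma big_tupleS n (F : n.+1.-tuple 'I_N -> S) :
  \sum_(w : n.+1.-tuple 'I_N) F w =
  \sum_a \sum_(w : n.-tuple 'I_N) F [tuple of a :: w].
Proof.
rewrite pair_big /=.
rewrite (reindex (fun p : 'I_N * n.-tuple 'I_N => [tuple of p.1 :: p.2])) //=.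
exists (fun w : n.+1.-tuple 'I_N => (thead w, [tuple of behead w])) => [[a w] _ | w _].
  by congr (_, _); apply: val_inj.
by rewrite /= -tuple_eta.
Qed.

Lemma big_tuple_head n (P : pred (seq 'I_N)) a (F : seq 'I_N -> S) :
  \sum_(w : n.+1.-tuple 'I_N | P w && (ohead w == Some a)) F w =
  \sum_(w : n.-tuple 'I_N | P (a :: w)) F (a :: w).
Proof.
rewrite big_mkcond big_tupleS (bigD1 a) //= [X in _ + X]big1 ?addr0.
  by rewrite [RHS]big_mkcond; apply: eq_bigr => w _; rewrite eqxx andbT.
move=> b /negbTE ba; apply: big1 => w _.
by rewrite -[Some b == _]/(b == a) ba andbF.
Qed.

Lemma words_from1 a : words_from 1 a = 'X_a.
Proof.
rewrite /words_from big_tuple_head big_mkcond big_tuple0 /=.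
by rewrite /word_weight /xw /asc /des /= big_seq1 !expr0 !mul1r.
Qed.

Lemma words_fromS n a :
  words_from n.+2 a = 'X_a * \sum_(b | b != a) step_weight a b * words_from n.+1 b.
Proof.
rewrite /words_from big_tuple_head big_mkcond big_tupleS mulr_sumr.
rewrite (bigID (fun b => b != a)) /= [X in _ + X]big1 ?addr0; last first.
  move=> b /negPn /eqP ->; apply: big1 => w _.
  by rewrite /smirnov_word /adjpairs /= eqxx.
apply: eq_bigr => b ba; rewrite big_tuple_head !mulr_sumr [RHS]big_mkcond.
apply: eq_bigr => w _ /=.
rewrite /smirnov_word /word_weight /asc /des /xw /adjpairs /= big_cons.
have ab : val a != val b by rewrite val_eqE eq_sym.
rewrite ab andTb /step_weight; case: (all _ _); last by [].
by case: (ltngtP (val a) (val b)) ab => //= _ _; rewrite !exprS; ring.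
Qed.

Lemma big_words_upto D :
  \sum_(1 <= n < D.+1) \sum_(w : n.-tuple 'I_N | smirnov_word w) word_weight w =
  \sum_a words_upto D a.
Proof.
rewrite /words_upto [RHS]exchange_big /=; apply: eq_big_nat => -[//|n] _.
rewrite big_mkcond big_tupleS; apply: eq_bigr => a _.
by rewrite /words_from big_tuple_head [RHS]big_mkcond.
Qed.

Lemma big_step_weight a (Y : 'I_N -> S) :
  \sum_(b | b != a) step_weight a b * Y b =
  s * \sum_(b | (val a < val b)%N) Y b + t * \sum_(b | (val b < val a)%N) Y b.
Proof.
rewrite !mulr_sumr big_mkcond [X in _ = X + _]big_mkcond [X in _ = _ + X]big_mkcond.
rewrite -big_split; apply: eq_bigr => b _ /=; rewrite /step_weight -val_eqE /=.
by case: (ltngtP (val a) (val b)) => _; rewrite ?addr0 ?add0r.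
Qed.

Lemma morder_ge_words_from n a : morder_ge n (words_from n a).
Proof.
apply: morder_ge_sum => w _; apply: morder_geMl.
by apply: morder_ge_le (morder_ge_prodX w); rewrite size_tuple.
Qed.

Definition word_system k (Y : 'I_N -> S) :=
  forall a, morder_ge k (Y a - 'X_a * (1 + \sum_(b | b != a) step_weight a b * Y b)).

Lemma words_upto_system d : word_system d.+2 (words_upto d.+1).
Proof.
move=> a; pose Y b := \sum_(0 <= k < d) words_from k.+1 b.
have upto_last b : words_upto d.+1 b = Y b + words_from d.+1 b.
  by rewrite /words_upto big_add1 /= big_nat_recr.
have upto_head :
    words_upto d.+1 a = 'X_a + 'X_a * \sum_(b | b != a) step_weight a b * Y b.
  rewrite /words_upto big_ltn // words_from1 big_add1 /= big_add1 /=; congr (_ + _).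
  under eq_bigr do rewrite words_fromS.
  rewrite -mulr_sumr exchange_big /=; congr (_ * _); apply: eq_bigr => b _.
  by rewrite /Y mulr_sumr.
have -> : words_upto d.+1 a
          - 'X_a * (1 + \sum_(b | b != a) step_weight a b * words_upto d.+1 b)
        = - ('X_a * \sum_(b | b != a) step_weight a b * words_from d.+1 b).
  under eq_bigr do rewrite upto_last mulrDr.
  by rewrite upto_head big_split /=; ring.
apply/morder_geN; rewrite -[d.+2]add1n; apply: morder_geM (morder_geX a) _.
by apply: morder_ge_sum => b _; apply/morder_geMl/morder_ge_words_from.
Qed.

Lemma word_system_unique k Y Z :
  word_system k Y -> word_system k Z -> forall a, morder_ge k (Y a - Z a).
Proof.
move=> hY hZ.
suff: forall j, (j <= k)%N -> forall a, morder_ge j (Y a - Z a) by apply.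
elim=> [|j IHj] jk a; first exact: morder_ge0.
have diff_sum : \sum_(b | b != a) step_weight a b * (Y b - Z b) =
    \sum_(b | b != a) step_weight a b * Y b - \sum_(b | b != a) step_weight a b * Z b.
  by rewrite -sumrB; apply: eq_bigr => b _; rewrite mulrBr.
have -> : Y a - Z a =
    (Y a - 'X_a * (1 + \sum_(b | b != a) step_weight a b * Y b))
    - (Z a - 'X_a * (1 + \sum_(b | b != a) step_weight a b * Z b))
    + 'X_a * \sum_(b | b != a) step_weight a b * (Y b - Z b).
  by rewrite diff_sum; ring.
apply: morder_geD.
  exact: morder_geB (morder_ge_le jk (hY a)) (morder_ge_le jk (hZ a)).
rewrite -[j.+1]add1n; apply: morder_geM (morder_geX a) _.
by apply: morder_ge_sum => b _; apply/morder_geMl/IHj/ltnW.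
Qed.

Lemma telescope_word_system k G (u : nat -> S) :
  u 0%N = 0 -> morder_ge k (u N - G) ->
  (forall a : 'I_N, morder_ge k (u (val a).+1 - u (val a)
                       - 'X_a * (1 + s * (G - u (val a).+1) + t * u (val a)))) ->
  word_system k (fun a => u (val a).+1 - u (val a)).
Proof.
move=> u0 uNG hu a; rewrite big_step_weight telescope_ord_gt.
rewrite telescope_ord_lt ?u0 ?subr0; last exact/ltnW/ltn_ord.
have -> : u (val a).+1 - u (val a)
          - 'X_a * (1 + (s * (u N - u (val a).+1) + t * u (val a)))
    = (u (val a).+1 - u (val a) - 'X_a * (1 + s * (G - u (val a).+1) + t * u (val a)))
      - 'X_a * s * (u N - G) by ring.
exact/morder_geB/morder_geMl.
Qed.

End Words.

Section PartialSums.
Variables N D : nat.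
Implicit Types a : 'I_N.

Lemma morder_ge_Groot a : morder_ge 1 (Groot D a).
Proof.
apply: morder_ge_sum => t /andP [/andP [_ /andP [t_gt0 _]] _].
exact: morder_ge_le t_gt0 (morder_ge_tweight t).
Qed.

Lemma morder_ge_Groot_lt k : morder_ge 1 (Groot_lt N D k).
Proof. by apply: morder_ge_sum => a _; apply: morder_ge_Groot. Qed.

Lemma Groot_lt0 : Groot_lt N D 0 = 0.
Proof. exact: big_pred0. Qed.

Lemma Groot_ltN : Groot_lt N D N = Gtrunc N D.
Proof. by rewrite Gtrunc_Groot; apply: eq_bigl => a; rewrite ltn_ord. Qed.

Lemma Groot_ltS a : Groot_lt N D (val a).+1 = Groot_lt N D (val a) + Groot D a.
Proof.
rewrite /Groot_lt (bigD1 a) ?ltnSn //= addrC; congr (_ + _).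
by apply: eq_bigl => b; rewrite ltnS andbC -val_eqE -ltn_neqAle.
Qed.

Lemma Groot_gtE a : Groot_gt N D (val a) = Gtrunc N D - Groot_lt N D (val a).+1.
Proof.
apply/eqP; rewrite eq_sym subr_eq addrC -Groot_ltN /Groot_lt /Groot_gt; apply/eqP.
rewrite (bigID (fun b : 'I_N => (val b < (val a).+1)%N)) /=.
by congr (_ + _); apply: eq_bigl => b; rewrite ltn_ord // ltnS -ltnNge.
Qed.

End PartialSums.

Definition moebius_lt N D k : Ser N :=
  moebius D lamb%:MP lam%:MP (Gtrunc N D) (Groot_lt N D k).

Lemma moebius_lt_step N d (a : 'I_N) :
  let G := Gtrunc N d.+1 in
  morder_ge d.+2
    (moebius_lt N d.+1 (val a).+1 - moebius_lt N d.+1 (val a)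
     - 'X_a * (1 + (rhob%:MP * lamb%:MP * G + rhob%:MP + lamb%:MP)
                     * (G - moebius_lt N d.+1 (val a).+1)
                 + (rho%:MP * lam%:MP * G + rho%:MP + lam%:MP)
                     * moebius_lt N d.+1 (val a))).
Proof.
rewrite /moebius_lt Groot_ltS; apply: moebius_step.
- by rewrite -Groot_ltN; apply: morder_ge_Groot_lt.
- exact: morder_geX.
- exact: morder_ge_Groot_lt.
- exact: morder_ge_Groot.
by rewrite -Groot_ltS -Groot_gtE; apply: Groot_rec.
Qed.

Theorem mainTheorem2 (N D : nat) :
  let G := Gtrunc N D in
  let s := rhob%:MP * lamb%:MP * G + rhob%:MP + lamb%:MP in
  let t := rho%:MP * lam%:MP * G + rho%:MP + lam%:MP in
  trunc D G =
  trunc D (\sum_(1 <= n < D.+1)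
             \sum_(w : n.-tuple 'I_N | smirnov_word w)
                s ^+ asc w * t ^+ des w * xw w).
Proof.
move=> G s t; apply: trunc_eq.
have G_order : morder_ge 1 G by rewrite /G -Groot_ltN; apply: morder_ge_Groot_lt.
case: D => [|d] in G s t G_order *; first by rewrite big_geq // subr0.
pose u := moebius_lt N d.+1.
have u0 : u 0%N = 0 by rewrite /u /moebius_lt Groot_lt0 moebius0.
have uN : morder_ge d.+2 (u N - G).
  by rewrite /u /moebius_lt Groot_ltN; apply: moebiusG.
have u_sys : word_system s t d.+2 (fun a => u (val a).+1 - u (val a)).
  exact: telescope_word_system u0 uN (moebius_lt_step d).
have := word_system_unique u_sys (words_upto_system s t d).
rewrite (big_words_upto s t d.+1) => u_words.
have -> : G - \sum_a words_upto s t d.+1 a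
        = - (u N - G) + \sum_a (u (val a).+1 - u (val a) - words_upto s t d.+1 a).
  by rewrite sumrB telescope_ord u0 subr0 opprB addrA subrK.
apply: morder_geD; first exact: morder_geN.
by apply: morder_ge_sum => a _; apply: u_words.
Qed.
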